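(* In the model described in the context, if $(\tilde y_0^+,\tilde y_0^-)=(1,1)$ (deterministically), then $\Pr(W_2)-\Pr(W_1) = \tfrac12(G-A)$.
   Context: Model. Fix an integer $m\ge 2$, and reals $1>\rho>q>0$, $0\le\nu<\tfrac12$. A sample consists of ground-truth labels $y_0,y_1,\dots,y_m\in\{0,1\}$ and noisy labels $\tilde y_0,\dots,\tilde y_m\in\{0,1\}$. Given $y_0$, the labels $y_1,\dots,y_m$ are conditionally independent with $\Pr(y_i=1\mid y_0=1)=\rho$ and $\Pr(y_i=1\mid y_0=0)=q$ for $i\in\{1,\dots,m\}$. For $i\in\{1,\dots,m\}$, $\tilde y_i = 1-y_i$ with probability $\nu$ and $\tilde y_i=y_i$ otherwise, the flips being independent of each other and of everything else. A positive sample has $y_0=1$ and a negative sample has $y_0=0$; we draw one positive sample (superscript $+$) and one negative sample (superscript $-$) independently. The pair $(\tilde y_0^+,\tilde y_0^-)\in\{0,1\}^2$ has an arbitrary distribution, independent of all $y_i^\pm,\tilde y_i^\pm$ with $i\ge1$. Fix $\delta>0$. For each sample set $\bar s_{0,i} := \max(\tilde y_0,\tilde y_i)+\delta\min(\tilde y_0,\tilde y_i)$ for $i=1,\dots,m$, and let $\bar r_1\ge \bar r_2$ be the largest and second largest elements of $\{\bar s_{0,1},\dots,\bar s_{0,m}\}$ (as a multiset). Notation: $\rho' := (1-\nu)\rho+\nu(1-\rho)$, $q':=(1-\nu)q+\nu(1-q)$, $a:=1-\rho'$, $\gamma := \frac{1-q'}{1-\rho'}$, $A := m(1-a)a^{m-1}$,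 $G := m(1-\gamma a)(\gamma a)^{m-1}$. For $k\in\{1,2\}$, $\Pr(W_k) := \Pr(\bar r_k^+>\bar r_k^-) + \tfrac12\Pr(\bar r_k^+=\bar r_k^-)$. *)

From mathcomp Require Import all_boot all_order all_algebra.
Set Implicit Arguments. Unset Strict Implicit. Unset Printing Implicit Defensive.
Import Order.TTheory GRing.Theory Num.Theory.
Local Open Scope ring_scope.

Section Model.
Variable R : realFieldType.

Definition b2r (b : bool) : R := if b then 1 else 0.

Definition bern (p : R) (b : bool) : R := if b then p else 1 - p.

Definition sbar (delta : R) (t0 ti : bool) : R :=
  Num.max (b2r t0) (b2r ti) + delta * Num.min (b2r t0) (b2r ti).

Variable m : nat.

(* outcome of one sample: (ground-truth labels y_1..y_m, flip indicators) *)
Definition outcome := ({ffun 'I_m -> bool} * {ffun 'I_m -> bool})%type.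

Definition sample_weight (p nu : R) (o : outcome) : R :=
  \prod_(i < m) (bern p (o.1 i) * bern nu (o.2 i)).

Definition noisy (o : outcome) : {ffun 'I_m -> bool} :=
  [ffun i => o.1 i (+) o.2 i].

Definition scores (delta : R) (t0 : bool) (yt : {ffun 'I_m -> bool}) : seq R :=
  [seq sbar delta t0 (yt i) | i <- enum 'I_m].

(* k-th largest element (k = 1 : largest, k = 2 : second largest) *)
Definition rank_k (k : nat) (s : seq R) : R :=
  nth 0 (sort (fun x y => y <= x) s) k.-1.

Definition winval (x y : R) : R :=
  if y < x then 1 else if x == y then 1 / 2 else 0.

(* Pr(W_k) = Pr(r_k^+ > r_k^-) + 1/2 Pr(r_k^+ = r_k^-), where p0 is the
   distribution of (tilde y_0^+, tilde y_0^-), independent of the rest;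
   the positive sample has Pr(y_i=1)=rho, the negative one Pr(y_i=1)=q. *)
Definition PrW (rho q nu delta : R) (p0 : bool * bool -> R) (k : nat) : R :=
  \sum_(t0 : bool * bool) \sum_(op : outcome) \sum_(on : outcome)
    p0 t0 * sample_weight rho nu op * sample_weight q nu on *
    winval (rank_k k (scores delta t0.1 (noisy op)))
           (rank_k k (scores delta t0.2 (noisy on))).

Definition rho' (rho nu : R) : R := (1 - nu) * rho + nu * (1 - rho).
Definition a_par (rho nu : R) : R := 1 - rho' rho nu.
Definition gamma_par (rho q nu : R) : R := (1 - rho' q nu) / (1 - rho' rho nu).
Definition A_par (rho nu : R) : R :=
  m%:R * (1 - a_par rho nu) * a_par rho nu ^+ m.-1.
Definition G_par (rho q nu : R) : R :=
  m%:R * (1 - gamma_par rho q nu * a_par rho nu)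
       * (gamma_par rho q nu * a_par rho nu) ^+ m.-1.

End Model.

From mathcomp Require Import all_boot all_order all_algebra.
From mathcomp Require Import ring lra.
Import Order.TTheory GRing.Theory Num.Theory.
Local Open Scope ring_scope.

(* With both anchor labels equal to 1, every score is 1 + delta or 1 according
   to the noisy label, so the k-th largest score of a sample is 1 + delta
   exactly when the sample has at least k noisy ones.  Comparing two such
   two-level values gives Pr(W_k) = (1 + P+(N >= k) - P-(N >= k)) / 2, where N
   counts noisy ones, hence Pr(W_2) - Pr(W_1) = (P-(N = 1) - P+(N = 1)) / 2.
   The noisy labels are i.i.d. Bernoulli(rho') (resp. q'), so
   P(N = 1) = m rho' (1 - rho')^(m-1), which is A (resp. G, as gamma a = 1 - q'). *)

Lemma nth_sorted_bool (s : seq bool) j :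
  sorted (fun x y => y ==> x) s -> nth false s j = (j < count id s)%N.
Proof.
elim: s j => [|b s IH] j /= srt; first by rewrite nth_nil.
have srt_s := path_sorted srt.
case: b srt => [_|srt].
  by case: j => [|j] //=; rewrite IH.
have /allP s_false : all (fun y => y ==> false) s.
  by apply: (order_path_min _ srt) => -[] [] [].
have count0 : count id s = 0%N.
  by apply/eqP; rewrite -leqn0 leqNgt -has_count; apply/hasP => -[y /s_false]; case: y.
by case: j => [|j]; rewrite /= ?IH // count0.
Qed.

Lemma sum_weights2_affine (R : fieldType) (T : finType) (w1 w2 f g : T -> R) :
  \sum_x w1 x = 1 -> \sum_x w2 x = 1 ->
  \sum_x \sum_y w1 x * w2 y * ((1 + f x - g y) / 2)
  = (1 + \sum_x w1 x * f x - \sum_y w2 y * g y) / 2.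
Proof.
move=> w1_sum w2_sum.
have split_term x y : w1 x * w2 y * ((1 + f x - g y) / 2) =
    (w1 x * (1 + f x) / 2) * w2 y - w1 x / 2 * (w2 y * g y) by ring.
under eq_bigr do under eq_bigr do rewrite split_term.
under eq_bigr do rewrite sumrB -!mulr_sumr w2_sum mulr1.
rewrite sumrB -mulr_suml -!mulr_suml w1_sum.
under eq_bigr do rewrite mulrDr mulr1.
by rewrite big_split /= w1_sum; ring.
Qed.

Section NoisyOnes.
Variable R : realFieldType.
Variable m : nat.

Definition ones (z : {ffun 'I_m -> bool}) : nat := #|[pred i | z i]|.

Lemma sbar_true (delta : R) (b : bool) : sbar delta true b = 1 + delta * b2r R b.
Proof. by rewrite /sbar /b2r; case: b; rewrite ?maxxx ?minxx ?max_l ?min_r ?ler01. Qed.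

Lemma rank_k_scores_true (delta : R) k (yt : {ffun 'I_m -> bool}) :
  0 < delta -> (0 < k <= m)%N ->
  rank_k k (scores delta true yt) = 1 + delta * b2r R (k <= ones yt)%N.
Proof.
move=> delta_gt0 /andP[k_gt0 k_le_m].
pose level (b : bool) : R := 1 + delta * b2r R b.
pose L := [seq yt i | i <- enum 'I_m].
have level_mono : {mono level : x y / y ==> x >-> y <= x}.
  move=> [] [] /=; rewrite /level /b2r ?lexx // mulr1 mulr0 addr0.
    by rewrite lerDl ltW.
  by rewrite gerDl lt_geF.
have scoresE : scores delta true yt = map level L.
  by rewrite /scores /L -map_comp; apply: eq_map => i; rewrite /= sbar_true.
have count_L : count id L = ones yt.
  rewrite /ones cardE count_map /enum_mem size_filter.
  by rewrite (@eq_filter _ _ predT) ?filter_predT.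
have size_sort_L : size (sort (fun x y => y ==> x) L) = m.
  by rewrite size_sort size_map size_enum_ord.
rewrite /rank_k scoresE -(map_sort level_mono) (nth_map false); last by rewrite size_sort_L prednK.
rewrite nth_sorted_bool; last by apply: sort_sorted => -[] [].
by rewrite count_sort count_L prednK.
Qed.

Lemma winval_levels (delta : R) (b c : bool) : 0 < delta ->
  winval (1 + delta * b2r R b) (1 + delta * b2r R c) = (1 + b2r R b - b2r R c) / 2.
Proof.
move=> delta_gt0; have lt1 : 1 < 1 + delta by rewrite ltrDl.
rewrite /winval /b2r.
by case: b; case: c; rewrite ?mulr1 ?mulr0 ?addr0 ?ltxx ?eqxx ?lt1 ?(lt_eqF lt1) ?(lt_gtF lt1) /=; field.
Qed.

Lemma sum_sample_weight_prod (p nu : R) (F : 'I_m -> bool -> R) :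
  \sum_(o : outcome m) sample_weight p nu o * \prod_(i < m) F i (noisy o i) =
  \prod_(i < m) \sum_(a : bool) \sum_(b : bool) bern p a * bern nu b * F i (a (+) b).
Proof.
rewrite bigA_distr_bigA /=; under eq_bigr do rewrite bigA_distr_bigA.
rewrite pair_big; apply: eq_bigr => -[y flip] _.
by rewrite /sample_weight -big_split; apply: eq_bigr => i _; rewrite ffunE.
Qed.

Lemma sum_sample_weight (p nu : R) : \sum_(o : outcome m) sample_weight p nu o = 1.
Proof.
have := sum_sample_weight_prod p nu (fun _ _ => 1).
under eq_bigr do rewrite big1_eq mulr1.
by move=> ->; apply: big1 => i _; rewrite !big_bool /bern /=; ring.
Qed.

(* For each j, the product is the indicator that j is the only one of z. *)
Lemma b2r_ones_eq1 (z : {ffun 'I_m -> bool}) :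
  b2r R (ones z == 1)%N =
  \sum_(j < m) \prod_(i < m) (if i == j then b2r R (z i) else 1 - b2r R (z i)).
Proof.
rewrite /ones /b2r; case: (pickP [pred i | z i]) => [j zj | z_false]; last first.
  rewrite eq_card0 // big1 // => j _.
  by rewrite (bigD1 j) //= eqxx; have /= -> := z_false j; rewrite mul0r.
rewrite /= in zj; rewrite (cardD1 j) inE /= zj add1n eqSS.
rewrite (bigD1 j) //= [X in _ + X]big1 ?addr0 => [|k kj]; last first.
  by rewrite (bigD1 j) //= eq_sym (negbTE kj) zj subrr mul0r.
rewrite (bigD1 j) //= eqxx zj mul1r.
case: (pickP [pred i | (i != j) && z i]) => [k /andP[kj zk] | others_false].
  by rewrite (cardD1 k) !inE kj zk (bigD1 k) //= (negbTE kj) zk subrr mul0r.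
rewrite eq_card0 => [|i]; last by rewrite !inE; apply: others_false.
rewrite big1 // => i ij; rewrite (negbTE ij).
by have := others_false i; rewrite /= ij /= => ->; rewrite subr0.
Qed.

Lemma sum_sample_weight_ones_eq1 (p nu : R) :
  \sum_(o : outcome m) sample_weight p nu o * b2r R (ones (noisy o) == 1)%N
  = (rho' p nu * (1 - rho' p nu) ^+ m.-1) *+ m.
Proof.
under eq_bigr do rewrite b2r_ones_eq1 mulr_sumr.
rewrite exchange_big -[in RHS](card_ord m) -sumr_const; apply: eq_bigr => j _.
rewrite (sum_sample_weight_prod p nu (fun i b => if i == j then b2r R b else 1 - b2r R b)).
rewrite (bigD1 j) //= eqxx.
rewrite [X in _ * X](eq_bigr (fun=> 1 - rho' p nu)) => [|i ij]; last first.
  by rewrite (negbTE ij) !big_bool /bern /b2r /rho' /=; ring.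
rewrite prodr_const cardC1 card_ord.
by congr (_ * _); rewrite !big_bool /bern /b2r /rho' /=; ring.
Qed.

Definition prob_ones_ge (p nu : R) (k : nat) : R :=
  \sum_(o : outcome m) sample_weight p nu o * b2r R (k <= ones (noisy o))%N.

Lemma prob_ones_ge1_sub2 (p nu : R) :
  prob_ones_ge p nu 1 - prob_ones_ge p nu 2 = (rho' p nu * (1 - rho' p nu) ^+ m.-1) *+ m.
Proof.
rewrite -sum_sample_weight_ones_eq1 -sumrB; apply: eq_bigr => o _.
by rewrite -mulrBr /b2r; case: (ones (noisy o)) => [|[|n]]; rewrite /= ?subrr ?subr0.
Qed.

Lemma PrW_anchors_true (rho q nu delta : R) (p0 : bool * bool -> R) k :
  0 < delta -> (0 < k <= m)%N ->
  (forall t, p0 t = if t == (true, true) then 1 else 0) ->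
  PrW m rho q nu delta p0 k = (1 + prob_ones_ge rho nu k - prob_ones_ge q nu k) / 2.
Proof.
move=> delta_gt0 k_range p0E.
rewrite /PrW (bigD1 (true, true)) //= [X in _ + X]big1 ?addr0 => [|t t_neq]; last first.
  by apply: big1 => op _; apply: big1 => on _; rewrite p0E (negbTE t_neq) !mul0r.
rewrite p0E eqxx /prob_ones_ge -sum_weights2_affine ?sum_sample_weight //.
apply: eq_bigr => op _; apply: eq_bigr => on _.
by rewrite mul1r !rank_k_scores_true // winval_levels.
Qed.

End NoisyOnes.

Lemma A_parE (R : realFieldType) (m : nat) (rho nu : R) :
  A_par m rho nu = (rho' rho nu * (1 - rho' rho nu) ^+ m.-1) *+ m.
Proof. by rewrite /A_par /a_par -mulr_natl; ring. Qed.

Lemma G_parE (R : realFieldType) (m : nat) (rho q nu : R) :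
  rho' rho nu != 1 -> G_par m rho q nu = (rho' q nu * (1 - rho' q nu) ^+ m.-1) *+ m.
Proof.
move=> rho'_neq1; have a_neq0 : 1 - rho' rho nu != 0 by rewrite subr_eq0 eq_sym.
by rewrite /G_par /gamma_par /a_par divfK // -mulr_natl; ring.
Qed.

Theorem lemma4 (R : realFieldType) (m : nat) (rho q nu delta : R)
  (p0 : bool * bool -> R) :
  (2 <= m)%N -> 0 < q -> q < rho -> rho < 1 -> 0 <= nu -> nu < 1 / 2 ->
  0 < delta ->
  (forall t, p0 t = if t == (true, true) then 1 else 0) ->
  PrW m rho q nu delta p0 2 - PrW m rho q nu delta p0 1
  = (G_par m rho q nu - A_par m rho nu) / 2.
Proof.
move=> m_ge2 q_gt0 q_lt_rho rho_lt1 nu_ge0 nu_lt_half delta_gt0 p0E.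
have rho'_neq1 : rho' rho nu != 1 by rewrite lt_eqF // /rho'; nra.
rewrite !PrW_anchors_true ?(ltnW m_ge2) //.
rewrite A_parE G_parE // -!prob_ones_ge1_sub2.
by field.
Qed.
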